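(* Let $s\ge2$ groups of positive integer moduli be given: Group $j$ ($1\le j\le s$) consists of $L_j\ge1$ moduli $0<M_{j,1}<\dots<M_{j,L_j}$; put $\delta_j=\operatorname{lcm}(M_{j,1},\dots,M_{j,L_j})$, assumed pairwise distinct. Let $T_1,\dots,T_k$ ($k\ge2$) be nonempty subsets of $\{1,\dots,s\}$ whose union is $\{1,\dots,s\}$ (the second-stage groups), let $\xi_t=\operatorname{lcm}\{\delta_j:j\in T_t\}$, assumed pairwise distinct. Let $N$ be an integer with $0\le N<\operatorname{lcm}(\delta_1,\dots,\delta_s)$, let $r_{j,i}$ be the remainder of $N$ modulo $M_{j,i}$ and $n_{j,i}=(N-r_{j,i})/M_{j,i}$. Define $G_j=\max_{i}\min_{q\ne i}\gcd(M_{j,i},M_{j,q})/4$ if $L_j\ge2$ and $G_j=M_{j,1}/4$ if $L_j=1$; $\Upsilon_t=\max_{a\in T_t}\min_{b\in T_t,b\ne a}\gcd(\delta_a,\delta_b)/4$ if $|T_t|\ge2$ and $\Upsilon_t=\delta_a/4$ if $T_t=\{a\}$; and $\Upsilon=\max_{1\le i\le k}\min_{q\ne i}\gcd(\xi_i,\xi_q)/4$. Let $\tilde r_{j,i}$ be integers with $0\le\tilde r_{j,i}\le M_{j,i}-1$ and $|\tilde r_{j,i}-r_{j,i}|\le\tau_j$ for all $i,j$, where $$\tau_j<\min\Big(G_j,\ \min\{\Upsilon_t: j\in T_t\},\ \Upsilon\Big)\quad(1\le j\le s).$$ Then the three-stage algorithm (described in the context) outputs $\hat n_{j,i}=n_{j,i}$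 for all $i,j$, and its estimate $\hat N=\left[\frac1{\sum_jL_j}\sum_{j=1}^s\sum_{i=1}^{L_j}(\hat n_{j,i}M_{j,i}+\tilde r_{j,i})\right]$ satisfies $|\hat N-N|\le\left[\frac{\sum_{j=1}^sL_j\tau_j}{\sum_{j=1}^sL_j}\right]$.
   Context: For $x\in\mathbb R$, $[x]$ denotes the unique integer with $-1/2\le x-[x]<1/2$. Single-stage algorithm $\mathcal A$: for pairwise distinct positive integers $P_1,\dots,P_m$ ($m\ge2$), a reference index $k$ and integers $x_1,\dots,x_m$: for $i\ne k$ put $m_{ki}=\gcd(P_k,P_i)$, $\Gamma_{ki}=P_k/m_{ki}$, $\Gamma_{ik}=P_i/m_{ki}$, $\hat q_{ik}=[(x_i-x_k)/m_{ki}]$, let $\bar\Gamma_{ki}$ be an inverse of $\Gamma_{ki}$ modulo $\Gamma_{ik}$ and $\hat\xi_{ik}\equiv\hat q_{ik}\bar\Gamma_{ki}\pmod{\Gamma_{ik}}$, $0\le\hat\xi_{ik}<\Gamma_{ik}$; let $\hat n_k$ be the least nonnegative $y$ with $y\equiv\hat\xi_{ik}\pmod{\Gamma_{ik}}$ for all $i\ne k$ (the algorithm fails if none exists), and $\hat n_i=(\hat n_k\Gamma_{ki}-\hat q_{ik})/\Gamma_{ik}$ for $i\ne k$. In each use below the reference index is one attaining the relevant max-min of pairwise gcds. Three-stage algorithm: Stage 1: for each $j$, if $L_j\ge2$ apply $\mathcal A$ to $M_{j,1},\dots,M_{j,L_j}$ with inputs $\tilde r_{j,i}$, obtaining $\hat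 K_{j,i}$; if $L_j=1$ set $\hat K_{j,1}=0$; put $\hat N_j=[\frac1{L_j}\sum_i(\hat K_{j,i}M_{j,i}+\tilde r_{j,i})]$. Stage 2: for each $t$, if $|T_t|\ge2$ apply $\mathcal A$ to the moduli $(\delta_j)_{j\in T_t}$ with inputs $(\hat N_j)_{j\in T_t}$, obtaining $\hat H_{t,j}$ ($j\in T_t$); if $|T_t|=1$ set $\hat H_{t,j}=0$; put $\hat P_t=[\frac1{|T_t|}\sum_{j\in T_t}(\hat H_{t,j}\delta_j+\hat N_j)]$. Stage 3: apply $\mathcal A$ to $\xi_1,\dots,\xi_k$ with inputs $\hat P_1,\dots,\hat P_k$, obtaining $\hat l_1,\dots,\hat l_k$. Output, for each $j$ and a $t$ with $j\in T_t$, $\hat n_{j,i}=\hat l_t\xi_t/M_{j,i}+\hat H_{t,j}\delta_j/M_{j,i}+\hat K_{j,i}$. *)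

From HB Require Import structures.
From mathcomp Require Import all_boot all_order all_algebra.
Set Implicit Arguments. Unset Strict Implicit. Unset Printing Implicit Defensive.
Import Order.TTheory GRing.Theory Num.Theory.

Local Open Scope ring_scope.

(* [x] : the unique integer with -1/2 <= x - [x] < 1/2, i.e. floor (x + 1/2). *)
Definition rnd {R : archiRealFieldType} (x : R) : int := Num.floor (x + 2^-1).

Definition mingcd (P : seq nat) (i : nat) : nat :=
  \big[minn/nth 0%N P i]_(q < size P | q != i :> nat) gcdn (nth 0%N P i) (nth 0%N P q).

Definition maxmin (P : seq nat) : nat := \max_(i < size P) mingcd P i.

Definition is_ref (P : seq nat) (k : nat) : Prop :=
  (k < size P)%N /\ mingcd P k = maxmin P.

(* Single-stage algorithm A : moduli P, inputs x, reference index k.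
   Returns None when it fails (no simultaneous solution of the congruences). *)
Definition algA (P : seq nat) (x : seq int) (k : nat) : option (seq int) :=
  let m := size P in
  let Pk := nth 0%N P k in
  let xk := nth 0 x k in
  let mk i := gcdn Pk (nth 0%N P i) in
  let Gki i := (Pk %/ mk i)%N in
  let Gik i := (nth 0%N P i %/ mk i)%N in
  let qh i : int := rnd (((nth 0 x i - xk)%:~R / (mk i)%:R) : rat) in
  (* \bar Gamma_ki : an inverse of Gamma_ki modulo Gamma_ik (Bezout coefficient) *)
  let Gbar i : int := (egcdz (Gki i)%:Z (Gik i)%:Z).1 in
  let xih i : int := ((qh i * Gbar i) %% (Gik i)%:Z)%Z in
  let idx := [seq i <- iota 0 m | i != k] in
  let cond (y : nat) := all (fun i => (y%:Z == xih i %[mod (Gik i)%:Z])%Z) idx in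
  (* the least nonnegative solution, if any, is below the product of the moduli *)
  let B := (\prod_(i <- idx) Gik i)%N in
  match [seq y <- iota 0 B | cond y] with
  | [::] => None
  | y :: _ =>
      Some [seq (if i == k then y%:Z else ((y%:Z * (Gki i)%:Z - qh i) %/ (Gik i)%:Z)%Z)
           | i <- iota 0 m]
  end.

Section ThreeStage.
Variables (s K : nat).
Variable M : 'I_s -> seq nat.          (* group j : moduli M_{j,0} < ... < M_{j,L_j - 1} *)
Variable T : 'I_K -> {set 'I_s}.
Variable rt : 'I_s -> nat -> int.
Variable k1 : 'I_s -> nat.
Variable k2 : 'I_K -> nat.
Variable k3 : nat.
Variable tsel : 'I_s -> 'I_K.          (* for each j, a t with j \in T_t *)

Definition L (j : 'I_s) : nat := size (M j).
Definition Mji (j : 'I_s) (i : nat) : nat := nth 0%N (M j) i.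
Definition delta (j : 'I_s) : nat := \big[lcmn/1%N]_(m <- M j) m.
Definition xi (t : 'I_K) : nat := \big[lcmn/1%N]_(j in T t) delta j.
Definition Tl (t : 'I_K) : seq 'I_s := enum (T t).
Definition deltas (t : 'I_K) : seq nat := [seq delta j | j <- Tl t].
Definition xis : seq nat := [seq xi t | t <- enum 'I_K].

Definition stage1 (j : 'I_s) : option (seq int) :=
  if (2 <= L j)%N then algA (M j) [seq rt j i | i <- iota 0 (L j)] (k1 j)
  else Some [:: 0].
Definition Khat (j : 'I_s) (i : nat) : int := nth 0 (odflt [::] (stage1 j)) i.
Definition Nhat1 (j : 'I_s) : int :=
  rnd (((L j)%:R^-1 * \sum_(i < L j) (Khat j i * (Mji j i)%:Z + rt j i)%:~R) : rat).

Definition stage2 (t : 'I_K) : option (seq int) :=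
  if (2 <= size (Tl t))%N then algA (deltas t) [seq Nhat1 j | j <- Tl t] (k2 t)
  else Some [:: 0].
Definition Hhat (t : 'I_K) (j : 'I_s) : int :=
  nth 0 (odflt [::] (stage2 t)) (index j (Tl t)).
Definition Phat (t : 'I_K) : int :=
  rnd (((#|T t|)%:R^-1 * \sum_(j in T t) (Hhat t j * (delta j)%:Z + Nhat1 j)%:~R) : rat).

Definition stage3 : option (seq int) :=
  algA xis [seq Phat t | t <- enum 'I_K] k3.
Definition lhat (t : 'I_K) : int := nth 0 (odflt [::] stage3) (index t (enum 'I_K)).

Definition three_stage_ok : bool :=
  [forall j, stage1 j != None] && [forall t, stage2 t != None] && (stage3 != None).

(* Output \hat n_{j,i}  (the divisions xi_t / M_{j,i}, delta_j / M_{j,i} are exact) *)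
Definition nhat (j : 'I_s) (i : nat) : int :=
  lhat (tsel j) * (xi (tsel j) %/ Mji j i)%:Z + Hhat (tsel j) j * (delta j %/ Mji j i)%:Z
  + Khat j i.

Definition Nhat : int :=
  rnd (((\sum_(j : 'I_s) L j)%:R^-1 *
        \sum_(j : 'I_s) \sum_(i < L j) (nhat j i * (Mji j i)%:Z + rt j i)%:~R) : rat).

Definition Gb {R : archiRealFieldType} (j : 'I_s) : R :=
  if (2 <= L j)%N then (maxmin (M j))%:R / 4 else (Mji j 0)%:R / 4.
Definition Ups_t {R : archiRealFieldType} (t : 'I_K) : R :=
  if (2 <= size (Tl t))%N then (maxmin (deltas t))%:R / 4 else (nth 0%N (deltas t) 0)%:R / 4.
Definition Ups {R : archiRealFieldType} : R := (maxmin xis)%:R / 4.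

End ThreeStage.

From HB Require Import structures.
From mathcomp Require Import all_boot all_order all_algebra.
From mathcomp Require Import zify ring lra.
Set Implicit Arguments. Unset Strict Implicit. Unset Printing Implicit Defensive.
Import Order.TTheory GRing.Theory Num.Theory.
Local Open Scope ring_scope.

(* Algorithm A, fed with the exact remainders of n < lcm P modulo the P_i, returns
   the quotients n div P_i: the rounded quotient q̂_ik is exactly n_k Γ_ki - n_i Γ_ik,
   so n_k solves all the congruences y = ξ̂_ik (mod Γ_ik), and it is the least
   solution since a smaller y would make lcm P divide P_k (n_k - y) <= n.  Input
   errors below mingcd/4 change none of the roundings.
   The three stages chain this through residues: the average of the stage-1
   reconstructions K̂_{j,i} M_{j,i} + r̃_{j,i} is N mod δ_j up to the same error τ_j,
   so stage 2 recovers the quotients of N mod ξ_t by the δ_j, whose averaged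
   reconstructions approximate N mod ξ_t, and stage 3 recovers N div ξ_t.  Adding
   the three levels of quotients gives n_{j,i}, and then N̂ - N is the rounded
   average of the remainder errors. *)

Lemma divz_uniq (a b q : int) : 0 < b -> q * b <= a < (q + 1) * b -> (a %/ b)%Z = q.
Proof. move=> b_gt0 /andP[]; nia. Qed.

Lemma floor_divz (F : archiRealFieldType) (a b : int) : 0 < b ->
  Num.floor ((a%:~R : F) / b%:~R) = (a %/ b)%Z.
Proof.
move=> b_gt0; apply: floor_def; have bF_gt0 : (0 : F) < b%:~R by rewrite ltr0z.
rewrite ler_pdivlMr // ltr_pdivrMr // -!intrM ler_int ltr_int; lia.
Qed.

Lemma rnd_ratio (F : archiRealFieldType) (p : int) (n : nat) : (0 < n)%N ->
  rnd ((p%:~R : F) / n%:R) = ((2 * p + n%:Z) %/ (2 * n%:Z))%Z.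
Proof.
move=> n_gt0; rewrite /rnd -(floor_divz F); last lia.
congr Num.floor; rewrite intrD !intrM /= -[(n%:Z)%:~R]/(n%:R : F).
by field; rewrite pnatr_eq0 -lt0n.
Qed.

Lemma rnd_int (F : archiRealFieldType) (z : int) : rnd (z%:~R : F) = z.
Proof.
rewrite /rnd floorDzr ?intr_int // intrKfloor (@floor_def _ _ 0) ?addr0 //.
by rewrite add0r; apply/andP; split; lra.
Qed.

Lemma rnd_ratio_dist (F : archiRealFieldType) (S c : int) (n : nat) (e : F) :
  (0 < n)%N -> `|S - n%:Z * c|%:~R <= e ->
  `|rnd ((S%:~R : F) / n%:R) - c| <= rnd (e / n%:R).
Proof.
move=> n_gt0; rewrite intr_norm ler_norml => /andP[Se1 Se2].
rewrite rnd_ratio //; set q := ((2 * S + n%:Z) %/ (2 * n%:Z))%Z.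
have /andP[q_le q_gt] : q * (2 * n%:Z) <= 2 * S + n%:Z < (q + 1) * (2 * n%:Z).
  rewrite /q; lia.
have nF_gt0 : (0 : F) < n%:R by rewrite ltr0n.
rewrite ler_norml /rnd (_ : e / n%:R + 2^-1 = (2 * e + n%:R) / (2 * n%:R)); last first.
  by field; rewrite pnatr_eq0 -lt0n.
apply/andP; split.
- rewrite lerNl floor_ge_int ler_pdivlMr ?mulr_gt0 //.
  have : (c - q) * (2 * n%:Z) <= 2 * (n%:Z * c - S) + n%:Z by nia.
  rewrite -(ler_int F) !(intrD, intrM, intrN) /= -[(n%:Z)%:~R]/(n%:R : F).
  move: Se1; rewrite !(intrD, intrM, intrN) /= -[(n%:Z)%:~R]/(n%:R : F); lra.
- rewrite floor_ge_int ler_pdivlMr ?mulr_gt0 //.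
  have : (q - c) * (2 * n%:Z) <= 2 * (S - n%:Z * c) + n%:Z by nia.
  rewrite -(ler_int F) !(intrD, intrM, intrN) /= -[(n%:Z)%:~R]/(n%:R : F).
  move: Se2; rewrite !(intrD, intrM, intrN) /= -[(n%:Z)%:~R]/(n%:R : F); lra.
Qed.

Lemma rnd_avg_near (I : finType) (A : {pred I}) (B : nat) (f : I -> int) (c : int) :
  (0 < #|A|)%N -> (forall i, i \in A -> 4 * absz (f i - c) < B)%N ->
  (4 * absz (rnd ((#|A|%:R^-1 * \sum_(i in A) (f i)%:~R) : rat) - c) < B)%N.
Proof.
move=> A_gt0 f_near; have [i0 Ai0] := card_gt0P A_gt0.
set e : int := ((B - 1) %/ 4)%N.
have f_dev i : i \in A -> `|f i - c| <= e.
  by move=> Ai; have := f_near i Ai; rewrite /e -abszE lez_nat; lia.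
have sum_dev : `|\sum_(i in A) f i - #|A|%:Z * c|%:~R <= (#|A|%:Z * e)%:~R :> rat.
  have -> : \sum_(i in A) f i - #|A|%:Z * c = \sum_(i in A) (f i - c).
    by rewrite sumrB sumr_const -mulr_natl natz.
  rewrite ler_int; apply: le_trans (ler_norm_sum _ _ _) _.
  by rewrite -natz mulr_natl -sumr_const; apply: ler_sum.
have -> : \sum_(i in A) (f i)%:~R = (\sum_(i in A) f i)%:~R :> rat by rewrite rmorph_sum.
have := rnd_ratio_dist A_gt0 sum_dev.
rewrite intrM mulrAC divff ?mul1r ?pnatr_eq0 -?lt0n // rnd_int mulrC.
rewrite /e -abszE lez_nat; have := f_near i0 Ai0.
move: (absz (f i0 - c)) (absz (rnd _ - c)) => a b; lia.
Qed.

Lemma rnd_avg_ord_near (n B : nat) (f : 'I_n -> int) (c : int) : (0 < n)%N ->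
  (forall i, 4 * `|f i - c| < B)%N ->
  (4 * `|rnd ((n%:R^-1 * \sum_(i < n) (f i)%:~R) : rat) - c| < B)%N.
Proof.
move=> n_gt0 f_near; have := @rnd_avg_near _ 'I_n B f c.
by rewrite card_ord => /(_ n_gt0 (fun i _ => f_near i)).
Qed.

Lemma le_quarter_near (F : archiRealFieldType) (z : int) (B : nat) (e : F) :
  `|z|%:~R <= e -> e < B%:R / 4 -> (4 * `|z| < B)%N.
Proof.
rewrite -abszE => z_le e_lt; have : ((absz z)%:R : F) <= e := z_le.
by rewrite -(ltr_nat F) natrM; lra.
Qed.

Lemma norm_double_sum_le (F : archiRealFieldType) (s : nat) (L : 'I_s -> nat)
    (D : forall j, 'I_(L j) -> int) (e : 'I_s -> F) :
  (forall j i, `|D j i|%:~R <= e j) ->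
  `|\sum_(j < s) \sum_(i < L j) D j i|%:~R <= \sum_(j < s) (L j)%:R * e j.
Proof.
move=> D_le; have {}D_le j i : `|(D j i)%:~R : F| <= e j by rewrite -intr_norm.
rewrite intr_norm rmorph_sum; apply: le_trans (ler_norm_sum _ _ _) _.
apply: ler_sum => j _; rewrite rmorph_sum; apply: le_trans (ler_norm_sum _ _ _) _.
apply: le_trans (ler_sum _ (fun i _ => D_le j i)) _.
by rewrite sumr_const card_ord mulr_natl.
Qed.

Lemma biglcm_seq_gt0 (P : seq nat) :
  (forall m, m \in P -> 0 < m)%N -> (0 < \big[lcmn/1%N]_(m <- P) m)%N.
Proof.
by move=> P_gt0; rewrite big_seq; elim/big_ind: _ => // a b; rewrite lcmn_gt0 => -> ->.
Qed.

Lemma biglcm_seq_dvdn (P : seq nat) (z : nat) :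
  (forall m, m \in P -> m %| z)%N -> (\big[lcmn/1%N]_(m <- P) m %| z)%N.
Proof.
by move=> P_dvd; rewrite big_seq; elim/big_ind: _ => // a b; rewrite dvdn_lcm => -> ->.
Qed.

Lemma dvdn_biglcm_seq (P : seq nat) (m : nat) :
  m \in P -> (m %| \big[lcmn/1%N]_(x <- P) x)%N.
Proof. by move=> Pm; rewrite (big_rem m) //= dvdn_lcml. Qed.

Lemma sorted_ltn_gt0 (m : seq nat) : sorted ltn m -> (0 < nth 0%N m 0)%N ->
  forall x, x \in m -> (0 < x)%N.
Proof.
case: m => [|a m] //= m_sorted a_gt0 x; rewrite in_cons => /predU1P[->//|mx].
have := order_path_min ltn_trans m_sorted => /allP/(_ x mx).
exact/leq_trans/ltnW.
Qed.

Lemma divn_dvdn_split (N d m : nat) : (m %| d)%N ->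
  (N %/ m = N %/ d * (d %/ m) + N %% d %/ m)%N.
Proof.
move=> m_dvd; have [->|m_gt0] := posnP m; first by rewrite !divn0 muln0.
by rewrite {1}(divn_eq N d) -{2}(divnK m_dvd) mulnA divnMDl.
Qed.

Lemma modn_dvdn_offset (N d m : nat) (x : int) : (m %| d)%N ->
  ((N %% d) %/ m)%:Z * m%:Z + x - (N %% d)%:Z = x - (N %% m)%:Z.
Proof.
move=> m_dvd; have := divn_eq (N %% d) m; rewrite (modn_dvdm N m_dvd); lia.
Qed.

Lemma coprime_divn_gcd (a b : nat) : (0 < a)%N ->
  coprime (a %/ gcdn a b) (b %/ gcdn a b).
Proof.
move=> a_gt0; have g_gt0 : (0 < gcdn a b)%N by rewrite gcdn_gt0 a_gt0.
rewrite /coprime -(eqn_pmul2r g_gt0) mul1n muln_gcdl.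
by rewrite !divnK ?dvdn_gcdl ?dvdn_gcdr.
Qed.

Lemma mingcd_le (P : seq nat) (k i : nat) : (i < size P)%N -> i != k ->
  (mingcd P k <= gcdn (nth 0%N P k) (nth 0%N P i))%N.
Proof.
move=> i_lt i_neq; rewrite /mingcd -minEnat.
exact: (bigmin_le_cond _ (j := Ordinal i_lt) (P := fun q : 'I_(size P) => q != k :> nat)
   (fun q : 'I_(size P) => gcdn (nth 0%N P k) (nth 0%N P q))).
Qed.

Lemma rnd_gcd_diff (Pk Pi n : nat) (xk xi : int) :
  (0 < Pk)%N -> (0 < Pi)%N ->
  (4 * `|xi - (n %% Pi)%:Z| < gcdn Pk Pi)%N ->
  (4 * `|xk - (n %% Pk)%:Z| < gcdn Pk Pi)%N ->
  rnd (((xi - xk)%:~R / (gcdn Pk Pi)%:R) : rat) =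
    (n %/ Pk)%:Z * (Pk %/ gcdn Pk Pi)%:Z - (n %/ Pi)%:Z * (Pi %/ gcdn Pk Pi)%:Z.
Proof.
move=> Pk_gt0 Pi_gt0 xi_near xk_near.
have g_gt0 : (0 < gcdn Pk Pi)%N by rewrite gcdn_gt0 Pk_gt0.
rewrite rnd_ratio //; apply: divz_uniq; first lia.
have ek : (Pk %/ gcdn Pk Pi * gcdn Pk Pi = Pk)%N by rewrite divnK // dvdn_gcdl.
have ei : (Pi %/ gcdn Pk Pi * gcdn Pk Pi = Pi)%N by rewrite divnK // dvdn_gcdr.
have := divn_eq n Pk; have := divn_eq n Pi; move: ek ei xi_near xk_near.
move: (gcdn Pk Pi) (Pk %/ _)%N (Pi %/ _)%N (n %/ Pk)%N (n %/ Pi)%N (n %% Pk)%N (n %% Pi)%N.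
move=> *; nia.
Qed.

Lemma modz_bezout_inv (a b : nat) (nk ni : int) : coprime a b ->
  modz (modz ((nk * a%:Z - ni * b%:Z) * (egcdz a%:Z b%:Z).1) b%:Z) b%:Z = modz nk b%:Z.
Proof.
move=> ab_coprime; rewrite modz_mod; case: egcdzP => u v uv /= _.
move: uv; rewrite /gcdz /= (eqP ab_coprime) => uv.
have -> : (nk * a%:Z - ni * b%:Z) * u =
    (- ni * u - nk * v) * b%:Z + nk * (u * a%:Z + v * b%:Z) by ring.
by rewrite uv mulr1 modzMDl.
Qed.

Section AlgorithmA.
Variables (P : seq nat) (k n : nat).
Hypothesis P_gt0 : forall i, (i < size P)%N -> (0 < nth 0%N P i)%N.
Hypothesis k_lt : (k < size P)%N.
Hypothesis n_lt : (n < \big[lcmn/1%N]_(m <- P) m)%N.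

Local Notation Pk := (nth 0%N P k).
Local Notation Gik i := (nth 0%N P i %/ gcdn Pk (nth 0%N P i))%N.
Local Notation others := [seq i <- iota 0 (size P) | i != k].

Let mem_others i : i \in others -> (i < size P)%N /\ i != k.
Proof. by rewrite mem_filter mem_iota add0n => /andP[-> /andP[_ ->]]. Qed.

Let Pk_gt0 : (0 < Pk)%N. Proof. exact: P_gt0. Qed.

Lemma Gamma_gt0 i : (i < size P)%N -> (0 < Gik i)%N.
Proof.
move=> i_lt; have g_gt0 : (0 < gcdn Pk (nth 0%N P i))%N by rewrite gcdn_gt0 Pk_gt0.
by rewrite divn_gt0 // dvdn_leq ?P_gt0 ?dvdn_gcdr.
Qed.

Lemma biglcm_dvdn_ref_mul z : (forall i, i \in others -> Gik i %| z)%N ->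
  (\big[lcmn/1%N]_(m <- P) m %| Pk * z)%N.
Proof.
move=> Gdvd; apply: biglcm_seq_dvdn => m Pm; rewrite -(nth_index 0%N Pm).
have i_lt : (index m P < size P)%N by rewrite index_mem.
have [->|i_neq] := eqVneq (index m P) k; first exact: dvdn_mulr.
have i_other : index m P \in others by rewrite mem_filter i_neq mem_iota add0n i_lt.
apply: dvdn_trans (dvdn_mul (dvdnn Pk) (Gdvd _ i_other)).
rewrite muln_divA ?dvdn_gcdr // -divn_mulAC ?dvdn_gcdl //; exact: dvdn_mull.
Qed.

Lemma ref_quotient_lt_prod : (n %/ Pk < \prod_(i <- others) Gik i)%N.
Proof.
have prod_gt0 : (0 < \prod_(i <- others) Gik i)%N.
  rewrite big_seq_cond; apply: prodn_cond_gt0 => i /andP[/mem_others[i_lt _] _].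
  exact: Gamma_gt0.
rewrite ltn_divLR // mulnC; apply: leq_trans n_lt (dvdn_leq _ _).
  by rewrite muln_gt0 Pk_gt0.
by apply: biglcm_dvdn_ref_mul => i i_other; rewrite (big_rem i) //= dvdn_mulr.
Qed.

Lemma ref_quotient_least y : (y < n %/ Pk)%N ->
  ~~ all (fun i => y == n %/ Pk %[mod Gik i])%N others.
Proof.
move=> y_lt; apply/negP => /allP y_sol.
have lcm_dvd : (\big[lcmn/1%N]_(m <- P) m %| Pk * (n %/ Pk - y))%N.
  apply: biglcm_dvdn_ref_mul => i i_other.
  by have := y_sol i i_other; rewrite eq_sym eqn_mod_dvd // ltnW.
have := leq_trans (dvdn_leq _ lcm_dvd) (leq_trans _ (leq_divM n Pk)).
rewrite muln_gt0 Pk_gt0 subn_gt0 y_lt mulnC leq_mul2r leq_subr orbT leqNgt n_lt.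
by move=> /(_ isT isT).
Qed.

Lemma algA_exact (x : seq int) :
  (forall i, (i < size P)%N ->
     (4 * `|nth 0%R x i - (n %% nth 0%N P i)%:Z| < mingcd P k)%N) ->
  algA P x k = Some [seq (n %/ nth 0%N P i)%:Z | i <- iota 0 (size P)].
Proof.
move=> x_near; rewrite /algA.
have qh_exact i : (i < size P)%N -> i != k ->
    rnd (((x`_i - x`_k)%:~R / (gcdn Pk (nth 0%N P i))%:R) : rat) =
    (n %/ Pk)%:Z * (Pk %/ gcdn Pk (nth 0%N P i))%:Z - (n %/ nth 0%N P i)%:Z * (Gik i)%:Z.
  move=> i_lt i_neq; have mingcd_le_g := mingcd_le i_lt i_neq.
  apply: rnd_gcd_diff; [exact: Pk_gt0 | exact: P_gt0 | |].
  - by have := x_near i i_lt; lia.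
  - by have := x_near k k_lt; lia.
rewrite (eq_filter (a2 := fun y => all (fun i => y == n %/ Pk %[mod Gik i])%N others));
  last first.
  move=> y; apply: eq_in_all => i /mem_others[i_lt i_neq].
  rewrite qh_exact // modz_bezout_inv ?coprime_divn_gcd //.
  by rewrite !modz_nat eqz_nat.
have nk_lt := ref_quotient_lt_prod; set idx := others in nk_lt *.
set B := \prod_(i <- idx) _ in nk_lt *.
rewrite -(subnKC (ltnW nk_lt)) iotaD filter_cat.
rewrite (eq_in_filter (a2 := pred0)); last first.
  move=> y; rewrite mem_iota add0n => /andP[_ y_lt].
  by rewrite (negbTE (ref_quotient_least y_lt)).
rewrite filter_pred0 cat0s add0n.
case eBn: (B - n %/ Pk)%N => [|d]; first by move: nk_lt; rewrite -subn_gt0 eBn.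
rewrite /= (introT allP) => [|i _] //; congr Some.
apply/eq_in_map => i; rewrite mem_iota add0n => /andP[_ i_lt].
have [->//|i_neq] := eqVneq i k.
rewrite qh_exact // opprB addrC subrK mulzK //.
by rewrite eqz_nat -lt0n Gamma_gt0.
Qed.

End AlgorithmA.

Section ThreeStage.
Variables (s K : nat) (M : 'I_s -> seq nat) (T : 'I_K -> {set 'I_s}) (N : nat).
Variables (rt : 'I_s -> nat -> int) (R : archiRealFieldType) (tau : 'I_s -> R).
Variables (k1 : 'I_s -> nat) (k2 : 'I_K -> nat) (k3 : nat) (tsel : 'I_s -> 'I_K).
Hypothesis s_gt0 : (0 < s)%N.
Hypothesis L_gt0 : forall j, (0 < L M j)%N.
Hypothesis M0_gt0 : forall j, (0 < Mji M j 0)%N.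
Hypothesis M_sorted : forall j, sorted ltn (M j).
Hypothesis T_neq0 : forall t, T t != set0.
Hypothesis N_lt : (N < \big[lcmn/1%N]_(j : 'I_s) delta M j)%N.
Hypothesis rt_near : forall j i, (i < L M j)%N ->
  (`|rt j i - (N %% Mji M j i)%:Z|)%:~R <= tau j.
Hypothesis tau_lt_G : forall j, tau j < Gb M j.
Hypothesis tau_lt_Ups_t : forall j t, j \in T t -> tau j < Ups_t M T t.
Hypothesis tau_lt_Ups : forall j, tau j < Ups M T.
Hypothesis k1_ref : forall j, (2 <= L M j)%N -> is_ref (M j) (k1 j).
Hypothesis k2_ref : forall t, (2 <= size (Tl T t))%N -> is_ref (deltas M T t) (k2 t).
Hypothesis k3_ref : is_ref (xis M T) k3.
Hypothesis tsel_mem : forall j, j \in T (tsel j).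

Local Notation Nd j := (N %% delta M j)%N.
Local Notation Nx t := (N %% xi M T t)%N.

Let M_gt0 j x : x \in M j -> (0 < x)%N.
Proof. by apply: sorted_ltn_gt0; [exact: M_sorted | exact: M0_gt0]. Qed.

Lemma Mji_gt0 j i : (i < L M j)%N -> (0 < Mji M j i)%N.
Proof. by move=> i_lt; apply/M_gt0/mem_nth. Qed.

Lemma delta_gt0 j : (0 < delta M j)%N.
Proof. exact/biglcm_seq_gt0/M_gt0. Qed.

Lemma Mji_dvd_delta j i : (i < L M j)%N -> (Mji M j i %| delta M j)%N.
Proof. by move=> i_lt; apply/dvdn_biglcm_seq/mem_nth. Qed.

Lemma delta_dvd_xi j t : j \in T t -> (delta M j %| xi M T t)%N.
Proof. by move=> jT; apply: biglcmn_sup jT _. Qed.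

Lemma xi_gt0 t : (0 < xi M T t)%N.
Proof.
by rewrite /xi; elim/big_ind: _ => // [a b|j _]; rewrite ?lcmn_gt0 ?delta_gt0 // => -> ->.
Qed.

Lemma stage1_exact j : (2 <= L M j)%N ->
  stage1 M rt k1 j = Some [seq (Nd j %/ Mji M j i)%:Z | i <- iota 0 (L M j)].
Proof.
move=> L_ge2; rewrite /stage1 L_ge2; have [k_lt k_max] := k1_ref L_ge2.
apply: algA_exact => //.
- exact: Mji_gt0.
- exact: ltn_pmod (delta_gt0 j).
move=> i i_lt; rewrite (nth_map 0%N) ?size_iota // nth_iota // add0n.
rewrite (modn_dvdm N (Mji_dvd_delta i_lt)) k_max.
by apply: le_quarter_near (rt_near i_lt) _; have := tau_lt_G j; rewrite /Gb L_ge2.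
Qed.

Lemma Khat_exact j i : (i < L M j)%N -> Khat M rt k1 j i = (Nd j %/ Mji M j i)%:Z.
Proof.
move=> i_lt; have [L_ge2|L_lt2] := leqP 2 (L M j).
  by rewrite /Khat stage1_exact //= (nth_map 0%N) ?size_iota // nth_iota.
have L1 : L M j = 1%N by have := L_gt0 j; lia.
rewrite /Khat /stage1 ifF; last by rewrite leqNgt L_lt2.
move: i_lt; rewrite L1 ltnS leqn0 => /eqP-> /=.
have delta1 : delta M j = Mji M j 0.
  by move: L1; rewrite /delta /Mji /L; case: (M j) => [|m []] //= _; rewrite big_seq1.
by rewrite divn_small // -delta1 ltn_pmod // delta_gt0.
Qed.

Lemma Nhat1_near j (B : nat) : tau j < B%:R / 4 ->
  (4 * `|Nhat1 M rt k1 j - (Nd j)%:Z| < B)%N.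
Proof.
move=> tau_lt; apply: rnd_avg_ord_near => // i.
rewrite Khat_exact // modn_dvdn_offset ?Mji_dvd_delta //.
exact: le_quarter_near (rt_near (ltn_ord i)) tau_lt.
Qed.

Lemma stage2_exact t : (2 <= size (Tl T t))%N ->
  stage2 M T rt k1 k2 t =
  Some [seq (Nx t %/ nth 0%N (deltas M T t) i)%:Z | i <- iota 0 (size (deltas M T t))].
Proof.
move=> T_ge2; rewrite /stage2 T_ge2; have [k_lt k_max] := k2_ref T_ge2.
have j0 : 'I_s := Ordinal s_gt0.
apply: algA_exact => //.
- by move=> i i_lt; have /mapP[j _ ->] := mem_nth 0%N i_lt; apply: delta_gt0.
- by rewrite /deltas big_map /Tl big_enum ltn_pmod ?xi_gt0.
move=> i; rewrite size_map => i_lt.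
have jT : nth j0 (Tl T t) i \in T t by rewrite -mem_enum; apply: mem_nth.
rewrite !(nth_map j0) // (modn_dvdm N (delta_dvd_xi jT)) k_max.
by apply: Nhat1_near; have := tau_lt_Ups_t jT; rewrite /Ups_t T_ge2.
Qed.

Lemma Hhat_exact t j : j \in T t -> Hhat M T rt k1 k2 t j = (Nx t %/ delta M j)%:Z.
Proof.
move=> jT; have jTl : j \in Tl T t by rewrite mem_enum.
have [T_ge2|T_lt2] := leqP 2 (size (Tl T t)).
  rewrite /Hhat stage2_exact //= (nth_map 0%N) ?size_iota ?size_map ?index_mem //.
  by rewrite nth_iota ?index_mem // add0n /deltas (nth_map j) ?index_mem // nth_index.
rewrite /Hhat /stage2 ifF; last by rewrite leqNgt T_lt2.
have /cards1P[j' Tj'] : #|T t| == 1%N.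
  by rewrite eqn_leq card_gt0 T_neq0 andbT cardE -ltnS.
move: jT; rewrite Tj' in_set1 => /eqP ->.
rewrite divn_small; last by rewrite /xi Tj' big_set1 ltn_pmod ?delta_gt0.
by case: (index _ _) => //= n; rewrite nth_nil.
Qed.

Lemma Phat_near t : (4 * `|Phat M T rt k1 k2 t - (Nx t)%:Z| < maxmin (xis M T))%N.
Proof.
apply: rnd_avg_near => [|j jT]; first by rewrite card_gt0 T_neq0.
rewrite Hhat_exact // modn_dvdn_offset ?delta_dvd_xi //.
by apply: Nhat1_near; apply: tau_lt_Ups.
Qed.

Lemma stage3_exact : stage3 M T rt k1 k2 k3 =
  Some [seq (N %/ nth 0%N (xis M T) i)%:Z | i <- iota 0 (size (xis M T))].
Proof.
have [k_lt k_max] := k3_ref.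
apply: algA_exact => //.
- by move=> i i_lt; have /mapP[t _ ->] := mem_nth 0%N i_lt; apply: xi_gt0.
- apply: leq_trans N_lt (dvdn_leq _ _).
    by apply: biglcm_seq_gt0 => m /mapP[t _ ->]; apply: xi_gt0.
  apply/dvdn_biglcmP => j _; apply: dvdn_trans (delta_dvd_xi (tsel_mem j)) _.
  by apply/dvdn_biglcm_seq/map_f; rewrite mem_enum.
move=> i; rewrite size_map => i_lt.
have t0 : 'I_K by rewrite size_enum_ord in i_lt; exact: Ordinal i_lt.
by rewrite (nth_map t0) // /xis (nth_map t0) // k_max; apply: Phat_near.
Qed.

Lemma lhat_exact t : lhat M T rt k1 k2 k3 t = (N %/ xi M T t)%:Z.
Proof.
have t_idx : (index t (enum 'I_K) < size (xis M T))%N.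
  by rewrite size_map index_mem mem_enum.
rewrite /lhat stage3_exact /odflt /oapp (nth_map 0%N) ?size_iota //.
by rewrite nth_iota //= (add0n (index t _)) (nth_map t) ?nth_index ?index_mem ?mem_enum.
Qed.

Lemma nhat_exact j i : (i < L M j)%N ->
  nhat M T rt k1 k2 k3 tsel j i = (N %/ Mji M j i)%:Z.
Proof.
move=> i_lt; rewrite /nhat lhat_exact Hhat_exact // Khat_exact // -!PoszM -!PoszD.
have Mdelta := Mji_dvd_delta i_lt; have deltaxi := delta_dvd_xi (tsel_mem j).
rewrite (divn_dvdn_split N (dvdn_trans Mdelta deltaxi)).
by rewrite (divn_dvdn_split (N %% xi M T (tsel j)) Mdelta) (modn_dvdm N deltaxi) addnA.
Qed.

Lemma three_stage_succeeds : three_stage_ok M T rt k1 k2 k3.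
Proof.
rewrite /three_stage_ok stage3_exact andbT; apply/andP; split; apply/forallP.
- move=> j; have [L_ge2|L_lt2] := leqP 2 (L M j); first by rewrite stage1_exact.
  by rewrite /stage1 ifF // leqNgt L_lt2.
- move=> t; have [T_ge2|T_lt2] := leqP 2 (size (Tl T t)); first by rewrite stage2_exact.
  by rewrite /stage2 ifF // leqNgt T_lt2.
Qed.

Lemma Nhat_near : `|Nhat M T rt k1 k2 k3 tsel - N%:Z| <=
  rnd ((\sum_(j : 'I_s) (L M j)%:R * tau j) / (\sum_(j : 'I_s) (L M j)%:R)).
Proof.
set n := (\sum_(j < s) L M j)%N.
have n_gt0 : (0 < n)%N by rewrite /n (bigD1 (Ordinal s_gt0)) //= addn_gt0 L_gt0.
pose D j (i : 'I_(L M j)) := rt j i - (N %% Mji M j i)%:Z.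
set S := \sum_(j < s) \sum_(i < L M j)
  (nhat M T rt k1 k2 k3 tsel j i * (Mji M j i)%:Z + rt j i).
have S_dev : S - n%:Z * N%:Z = \sum_(j < s) \sum_(i < L M j) D j i.
  have nhatM j (i : 'I_(L M j)) :
      nhat M T rt k1 k2 k3 tsel j i * (Mji M j i)%:Z + rt j i = N%:Z + D j i.
    rewrite nhat_exact // /D {2}(divn_eq N (Mji M j i)) PoszD PoszM; ring.
  rewrite /S (eq_bigr _ (fun j _ => eq_bigr _ (fun i _ => nhatM j i))).
  under eq_bigr => j _ do rewrite big_split /= sumr_const card_ord.
  by rewrite big_split /= sumrMnr -mulr_natl natz addrAC subrr add0r.
have -> : Nhat M T rt k1 k2 k3 tsel = rnd ((S%:~R : rat) / n%:R).
  rewrite /Nhat mulrC; congr (rnd (_ / _)).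
  by rewrite rmorph_sum; apply: eq_bigr => j _; rewrite rmorph_sum.
rewrite (rnd_ratio rat) // -(rnd_ratio R) // -natr_sum.
apply: rnd_ratio_dist => //; rewrite S_dev.
exact: norm_double_sum_le (fun j i => rt_near (ltn_ord i)).
Qed.

Lemma three_stage_correct :
  three_stage_ok M T rt k1 k2 k3
  /\ (forall j i, (i < L M j)%N ->
        nhat M T rt k1 k2 k3 tsel j i = ((N - N %% Mji M j i) %/ Mji M j i)%N%:Z)
  /\ `|Nhat M T rt k1 k2 k3 tsel - N%:Z| <=
       (rnd ((\sum_(j : 'I_s) (L M j)%:R * tau j) / (\sum_(j : 'I_s) (L M j)%:R))).
Proof.
split; [exact: three_stage_succeeds | split; last exact: Nhat_near].
move=> j i i_lt; rewrite nhat_exact //.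
by rewrite {2}(divn_eq N (Mji M j i)) addnK mulnK // Mji_gt0.
Qed.

End ThreeStage.

Theorem theorem4 (s K : nat) (M : 'I_s -> seq nat) (T : 'I_K -> {set 'I_s})
  (N : nat) (rt : 'I_s -> nat -> int)
  (R : archiRealFieldType) (tau : 'I_s -> R)
  (k1 : 'I_s -> nat) (k2 : 'I_K -> nat) (k3 : nat) (tsel : 'I_s -> 'I_K) :
  (2 <= s)%N -> (2 <= K)%N ->
  (forall j, 0 < L M j)%N ->
  (forall j, 0 < Mji M j 0)%N ->
  (forall j, sorted ltn (M j)) ->
  injective (delta M) ->
  (forall t, T t != set0) ->
  \bigcup_(t < K) T t = [set: 'I_s] ->
  injective (xi M T) ->
  (N < \big[lcmn/1%N]_(j : 'I_s) delta M j)%N ->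
  (forall j i, (i < L M j)%N -> 0 <= rt j i <= (Mji M j i)%:Z - 1) ->
  (forall j i, (i < L M j)%N ->
     (`|rt j i - (N %% Mji M j i)%:Z|)%:~R <= tau j) ->
  (forall j, tau j < Gb M j) ->
  (forall j t, j \in T t -> tau j < Ups_t M T t) ->
  (forall j, tau j < Ups M T) ->
  (forall j, (2 <= L M j)%N -> is_ref (M j) (k1 j)) ->
  (forall t, (2 <= size (Tl T t))%N -> is_ref (deltas M T t) (k2 t)) ->
  is_ref (xis M T) k3 ->
  (forall j, j \in T (tsel j)) ->
  three_stage_ok M T rt k1 k2 k3
  /\ (forall j i, (i < L M j)%N ->
        nhat M T rt k1 k2 k3 tsel j i = ((N - N %% Mji M j i) %/ Mji M j i)%N%:Z)
  /\ `|Nhat M T rt k1 k2 k3 tsel - N%:Z| <=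
       (rnd ((\sum_(j : 'I_s) (L M j)%:R * tau j) / (\sum_(j : 'I_s) (L M j)%:R))).
Proof.
move=> s_ge2 _ L_gt0 M0_gt0 M_sorted _ T_neq0 _ _ N_lt _ rt_near tau_lt_G
  tau_lt_Ups_t tau_lt_Ups k1_ref k2_ref k3_ref tsel_mem.
exact: (three_stage_correct (ltnW s_ge2) L_gt0 M0_gt0 M_sorted T_neq0 N_lt rt_near
  tau_lt_G tau_lt_Ups_t tau_lt_Ups k1_ref k2_ref k3_ref tsel_mem).
Qed.
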